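(* If projections $e$ and $f$ in a generalized Rickart $*$-ring $R$ are very orthogonal, then $e,f$ are orthogonal (i.e. $ef=0$), $GRP(e)\,GLP(f)=0$, and $eRf=0$.
   Context: A $*$-ring is an associative ring $R$ with an involution $x\mapsto x^*$ (additive, $(xy)^*=y^*x^*$, $x^{**}=x$). A projection is an element $e$ with $e=e^*=e^2$. For $a\in R$, $r(a)=\{b: ab=0\}$. $R$ is a generalized Rickart $*$-ring if for every $x$ there exist $n\ge1$ and a projection $g$ with $r(x^n)=gR$. $GRP(x)=e$ means $e$ is a projection and there is $n\in\mathbb N$ with $x^ne=x^n$ and $x^ny=0\Rightarrow ey=0$ for all $y$; $GLP(x)=f$ means $f$ is a projection and there is $n$ with $fx^n=x^n$ and $yx^n=0\Rightarrow yf=0$ for all $y$. Projections $e,f$ are very orthogonal if there is a central projection $h$ with $he=e$ and $hf=0$. *)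

From mathcomp Require Import all_boot all_algebra.
Set Implicit Arguments. Unset Strict Implicit. Unset Printing Implicit Defensive.
Import GRing.Theory.
Local Open Scope ring_scope.

Definition is_involution (R : pzRingType) (star : R -> R) : Prop :=
  [/\ forall x y : R, star (x + y) = star x + star y,
      forall x y : R, star (x * y) = star y * star x
    & forall x : R, star (star x) = x].

Definition is_projection (R : pzRingType) (star : R -> R) (e : R) : Prop :=
  e = star e /\ e = e * e.

Definition is_gen_rickart (R : pzRingType) (star : R -> R) : Prop :=
  forall x : R, exists n : nat, exists g : R,
    (0 < n)%N /\ is_projection star g /\
    (forall b : R, x ^+ n * b = 0 <-> exists y : R, b = g * y).

Definition GRP (R : pzRingType) (star : R -> R) (x e : R) : Prop :=
  is_projection star e /\
  exists n : nat, (0 < n)%N /\ x ^+ n * e = x ^+ n /\ (forall y : R, x ^+ n * y = 0 -> e * y = 0).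

Definition GLP (R : pzRingType) (star : R -> R) (x f : R) : Prop :=
  is_projection star f /\
  exists n : nat, (0 < n)%N /\ f * x ^+ n = x ^+ n /\ (forall y : R, y * x ^+ n = 0 -> y * f = 0).

Definition central (R : pzRingType) (h : R) : Prop := forall x : R, h * x = x * h.

Definition very_orthogonal (R : pzRingType) (star : R -> R) (e f : R) : Prop :=
  exists h : R, is_projection star h /\ central h /\ h * e = e /\ h * f = 0.

From mathcomp Require Import all_boot all_algebra.
Local Open Scope ring_scope.
Import GRing.Theory.

Set Implicit Arguments.
Unset Strict Implicit.

(* A central idempotent h with h e = e and h f = 0 separates e from f: for any
   x, e x f = h e x f = e x h f = 0.  Since e^n = e for idempotent e, a
   generalized right projection g of e kills everything e kills, in particular
   1 - h, so g = g h; dually h kills any generalized left projection h' of f,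
   whence g h' = g h h' = 0. *)

Lemma expr_idem (R : pzRingType) (e : R) (n : nat) :
  e * e = e -> (0 < n)%N -> e ^+ n = e.
Proof.
move=> ee; case: n => // n _; elim: n => [|n IHn]; first by rewrite expr1.
by rewrite exprS IHn ee.
Qed.

Section GeneralizedProjectionsOfIdempotents.

Variables (R : pzRingType) (star : R -> R) (e g : R).
Hypothesis e_idem : e * e = e.

Lemma GRP_idem_mulr_eq0 y : GRP star e g -> e * y = 0 -> g * y = 0.
Proof.
by case=> _ [n [n_gt0 [_ annih]]]; rewrite -(expr_idem e_idem n_gt0); apply: annih.
Qed.

Lemma GLP_idem_mull_eq0 y : GLP star e g -> y * e = 0 -> y * g = 0.
Proof.
by case=> _ [n [n_gt0 [_ annih]]]; rewrite -(expr_idem e_idem n_gt0); apply: annih.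
Qed.

End GeneralizedProjectionsOfIdempotents.

Section CentralSeparation.

Variables (R : pzRingType) (h e f : R).
Hypotheses (h_central : central h) (he : h * e = e) (hf : h * f = 0).

Lemma central_sep_mul_eq0 x : e * x * f = 0.
Proof. by rewrite -he -(mulrA h) h_central -mulrA hf mulr0. Qed.

Lemma central_sep_orth : e * f = 0.
Proof. by have := central_sep_mul_eq0 1; rewrite mulr1. Qed.

Lemma central_sep_mulr_subr1 : e * (1 - h) = 0.
Proof. by rewrite mulrBr mulr1 -h_central he subrr. Qed.

End CentralSeparation.

Lemma mulr_fix_of_subr1_eq0 (R : pzRingType) (g h : R) : g * (1 - h) = 0 -> g = g * h.
Proof. by move/eqP; rewrite mulrBr mulr1 subr_eq0 => /eqP. Qed.

Theorem mainTheorem18 (R : pzRingType) (star : R -> R)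
  (Hstar : is_involution star) (Hrick : is_gen_rickart star)
  (e f : R) (He : is_projection star e) (Hf : is_projection star f)
  (Hvo : very_orthogonal star e f) :
  e * f = 0 /\
  (forall g h : R, GRP star e g -> GLP star f h -> g * h = 0) /\
  (forall x : R, e * x * f = 0).
Proof.
case: Hvo => k [_ [k_central [ke kf]]].
split; first exact: central_sep_orth k_central ke kf.
split; last exact: central_sep_mul_eq0 k_central ke kf.
move=> g h grp_g glp_h.
have gk : g = g * k.
  apply/mulr_fix_of_subr1_eq0/(GRP_idem_mulr_eq0 (esym He.2) grp_g).
  exact: central_sep_mulr_subr1 k_central ke.
have kh : k * h = 0 := GLP_idem_mull_eq0 (esym Hf.2) glp_h kf.
by rewrite gk -mulrA kh mulr0.
Qed.
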